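(* (1) Let $(A,\cdot,[-,-])$ be a Poisson algebra and $\mathcal{B}$ a nondegenerate symmetric bilinear form on $A$ that is invariant on $(A,\cdot)$ and a commutative 2-cocycle on $(A,[-,-])$. Define $\circ$ on $A$ by $\mathcal{B}(x\circ y,z)=\mathcal{B}(y,[x,z])$ for all $x,y,z$. Then $(A,\cdot,\circ)$ is a PCA algebra and $x\circ y-y\circ x=[x,y]$ for all $x,y$. (2) Conversely, let $(A,\cdot,\circ)$ be a PCA algebra and $[x,y]=x\circ y-y\circ x$. Then $A\ltimes_{-\mathcal{L}^*_{\cdot},-\mathcal{L}^*_{\circ}}A^*$ is a Poisson algebra, and the bilinear form $\mathcal{B}_d$ on $A\oplus A^*$ is invariant on its commutative associative product and a commutative 2-cocycle on its Lie bracket.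
   Context: Finite-dimensional spaces, characteristic zero. $\mathcal{L}_{\ast}(x)y=x\ast y$. For $\rho:A\to\mathrm{End}(V)$, $\rho^*:A\to\mathrm{End}(V^* )$ is $\langle\rho^*(x)v^*,u\rangle=-\langle v^*,\rho(x)u\rangle$. For a Poisson algebra $(A,\cdot,[-,-])$ and linear maps $\mu,\rho:A\to\mathrm{End}(V)$, $A\ltimes_{\mu,\rho}V$ is $A\oplus V$ with $(x,u)\cdot(y,v)=(x\cdot y,\mu(x)v+\mu(y)u)$ and $[(x,u),(y,v)]=([x,y],\rho(x)v-\rho(y)u)$. $\mathcal{B}_d((x,a^* ),(y,b^* ))=\langle x,b^*\rangle+\langle a^*,y\rangle$. A bilinear form $\mathcal{B}$ is invariant on $(A,\cdot)$ if $\mathcal{B}(x\cdot y,z)=\mathcal{B}(x,y\cdot z)$; a commutative 2-cocycle on a Lie algebra if it is symmetric and $\mathcal{B}([x,y],z)+\mathcal{B}([y,z],x)+\mathcal{B}([z,x],y)=0$. Poisson algebra: $(A,\cdot)$ commutative associative, $(A,[-,-])$ Lie, $[z,x\cdot y]=[z,x]\cdot y+x\cdot[z,y]$. Anti-pre-Lie algebra: $(A,\circ)$ with $x\circ(y\circ z)-y\circ(x\circ z)=[y,x]\circ z$ and $[x,y]\circ z+[y,z]\circ x+[z,x]\circ y=0$, where $[x,y]=x\circ y-y\circ x$. A PCA algebra is $(A,\cdot,\circ)$ with $(A,\cdot)$ commutative associative, $(A,\circ)$ anti-pre-Lie, and for all $x,y,z$: $(x\cdot y)\circ z=x\cdot(y\circ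 z)+y\cdot(x\circ z)$; $(x\circ y-y\circ x)\cdot z=y\cdot(x\circ z)-x\circ(y\cdot z)$; $z\circ(x\cdot y)+z\cdot(x\circ y)+z\cdot(y\circ x)-2(x\cdot y)\circ z=0$. *)

(* Finite-dimensional spaces over a field K of characteristic
   zero are modelled as row vectors 'rV[K]_n; the dual space A^* is also
   'rV[K]_n, paired with A by the standard pairing <a, x> = \sum_i a_i x_i. *)
From HB Require Import structures.
From mathcomp Require Import all_boot all_order all_algebra.
Set Implicit Arguments. Unset Strict Implicit. Unset Printing Implicit Defensive.
Import Order.TTheory GRing.Theory Num.Theory.
Local Open Scope ring_scope.

Section Defs.
Variable K : fieldType.

Definition pca_bilinear_op (V : lmodType K) (f : V -> V -> V) : Prop :=
  forall (a : K) (x y z : V),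
    f (a *: x + y) z = a *: f x z + f y z /\ f z (a *: x + y) = a *: f z x + f z y.

Definition pca_bilinear_form (V : lmodType K) (B : V -> V -> K) : Prop :=
  forall (a : K) (x y z : V),
    B (a *: x + y) z = a * B x z + B y z /\ B z (a *: x + y) = a * B z x + B z y.

Definition pca_symmetric_form (V : lmodType K) (B : V -> V -> K) : Prop :=
  forall x y, B x y = B y x.

Definition pca_nondegenerate (V : lmodType K) (B : V -> V -> K) : Prop :=
  forall x, (forall y, B x y = 0) -> x = 0.

Definition pca_invariant_form (V : lmodType K) (B : V -> V -> K) (mul : V -> V -> V) : Prop :=
  forall x y z, B (mul x y) z = B x (mul y z).

Definition comm_2cocycle (V : lmodType K) (B : V -> V -> K) (br : V -> V -> V) : Prop :=
  pca_symmetric_form B /\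
  forall x y z, B (br x y) z + B (br y z) x + B (br z x) y = 0.

Definition comm_assoc (V : lmodType K) (mul : V -> V -> V) : Prop :=
  pca_bilinear_op mul /\ (forall x y, mul x y = mul y x) /\
  (forall x y z, mul (mul x y) z = mul x (mul y z)).

Definition lie_algebra (V : lmodType K) (br : V -> V -> V) : Prop :=
  pca_bilinear_op br /\ (forall x, br x x = 0) /\
  (forall x y z, br x (br y z) + br y (br z x) + br z (br x y) = 0).

Definition poisson_algebra (V : lmodType K) (mul br : V -> V -> V) : Prop :=
  comm_assoc mul /\ lie_algebra br /\
  (forall x y z, br z (mul x y) = mul (br z x) y + mul x (br z y)).

Definition commutator (V : lmodType K) (circ : V -> V -> V) (x y : V) : V :=
  circ x y - circ y x.

Definition anti_pre_lie (V : lmodType K) (circ : V -> V -> V) : Prop :=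
  pca_bilinear_op circ /\
  (forall x y z, circ x (circ y z) - circ y (circ x z) = circ (commutator circ y x) z) /\
  (forall x y z, circ (commutator circ x y) z + circ (commutator circ y z) x
                 + circ (commutator circ z x) y = 0).

Definition PCA_algebra (V : lmodType K) (mul circ : V -> V -> V) : Prop :=
  comm_assoc mul /\ anti_pre_lie circ /\
  (forall x y z, circ (mul x y) z = mul x (circ y z) + mul y (circ x z)) /\
  (forall x y z, mul (circ x y - circ y x) z = mul y (circ x z) - circ x (mul y z)) /\
  (forall x y z, circ z (mul x y) + mul z (circ x y) + mul z (circ y x)
                 - (circ (mul x y) z) *+ 2 = 0).

Variable n : nat.
Notation A := 'rV[K]_n.

Definition pairing (a x : A) : K := \sum_(i < n) a 0 i * x 0 i.

(* dual representation rho^*: <rho^*(x) a, u> = - <a, rho(x) u>,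
   written out on the standard basis *)
Definition dual_rep (rho : A -> A -> A) (x a : A) : A :=
  \row_(j < n) (- pairing a (rho x (delta_mx 0 j))).

Definition Lmul (op : A -> A -> A) : A -> A -> A := fun x y => op x y.

(* semidirect product A \ltimes_{mu,rho} V with V = A^* *)
Definition sd_mul (mulA : A -> A -> A) (mu : A -> A -> A) (p q : A * A) : A * A :=
  (mulA p.1 q.1, mu p.1 q.2 + mu q.1 p.2).

Definition sd_br (brA : A -> A -> A) (rho : A -> A -> A) (p q : A * A) : A * A :=
  (brA p.1 q.1, rho p.1 q.2 - rho q.1 p.2).

Definition Bd (p q : A * A) : K := pairing q.2 p.1 + pairing p.2 q.1.

End Defs.

(* (1) Since B is nondegenerate, an identity in A may be tested against an
   arbitrary vector w.  Tested against w, the commutator of the transposed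
   bracket becomes exactly the cocycle condition, the first anti-pre-Lie
   identity becomes the Jacobi identity, and the three compatibility axioms
   become identities among the scalars B(u.v, [s,t]) that follow from the
   Leibniz rule, the invariance of B and one instance of the cocycle condition.
   For any bilinear product satisfying the first anti-pre-Lie identity, the
   Jacobi expression of its commutator equals -2 times the left-hand side of
   the second identity; this gives the second identity in characteristic zero.
   (2) The same relation gives the Jacobi identity for the commutator of a PCA
   algebra; the remaining identities on A + A^* are checked componentwise,
   pairing the A^* component with an arbitrary vector. *)

From HB Require Import structures.
From mathcomp Require Import all_boot all_order all_algebra.
From mathcomp Require Import ring.
Import GRing.Theory.
Local Open Scope ring_scope.

Set Implicit Arguments. Unset Strict Implicit.

Section Bilinear.
Variables (K : fieldType) (V : lmodType K).

Section Op.
Variables (f : V -> V -> V) (f_bil : pca_bilinear_op f).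

Lemma opDl x y z : f (x + y) z = f x z + f y z.
Proof. by have [h _] := f_bil 1 x y z; rewrite !scale1r in h. Qed.
Lemma opDr x y z : f z (x + y) = f z x + f z y.
Proof. by have [_ h] := f_bil 1 x y z; rewrite !scale1r in h. Qed.
Lemma op0l z : f 0 z = 0.
Proof. by apply: (addrI (f 0 z)); rewrite -opDl !addr0. Qed.
Lemma op0r z : f z 0 = 0.
Proof. by apply: (addrI (f z 0)); rewrite -opDr !addr0. Qed.
Lemma opZl a x z : f (a *: x) z = a *: f x z.
Proof. by have [h _] := f_bil a x 0 z; rewrite !addr0 op0l addr0 in h. Qed.
Lemma opZr a x z : f z (a *: x) = a *: f z x.
Proof. by have [_ h] := f_bil a x 0 z; rewrite !addr0 op0r addr0 in h. Qed.
Lemma opNl x z : f (- x) z = - f x z.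
Proof. by rewrite -scaleN1r opZl scaleN1r. Qed.
Lemma opNr x z : f z (- x) = - f z x.
Proof. by rewrite -scaleN1r opZr scaleN1r. Qed.
Lemma opBl x y z : f (x - y) z = f x z - f y z.
Proof. by rewrite opDl opNl. Qed.
Lemma opBr x y z : f z (x - y) = f z x - f z y.
Proof. by rewrite opDr opNr. Qed.

Lemma commutator_bilinear : pca_bilinear_op (commutator f).
Proof.
move=> a x y z; rewrite /commutator !(opDl, opDr, opZl, opZr).
by split; rewrite opprD addrACA -scalerBr.
Qed.
End Op.

Section Form.
Variables (B : V -> V -> K) (B_bil : pca_bilinear_form B).

Lemma formDl x y z : B (x + y) z = B x z + B y z.
Proof. by have [h _] := B_bil 1 x y z; rewrite scale1r mul1r in h. Qed.
Lemma formDr x y z : B z (x + y) = B z x + B z y.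
Proof. by have [_ h] := B_bil 1 x y z; rewrite scale1r mul1r in h. Qed.
Lemma form0l z : B 0 z = 0.
Proof. by apply: (addrI (B 0 z)); rewrite -formDl !addr0. Qed.
Lemma form0r z : B z 0 = 0.
Proof. by apply: (addrI (B z 0)); rewrite -formDr !addr0. Qed.
Lemma formZl a x z : B (a *: x) z = a * B x z.
Proof. by have [h _] := B_bil a x 0 z; rewrite !addr0 form0l addr0 in h. Qed.
Lemma formZr a x z : B z (a *: x) = a * B z x.
Proof. by have [_ h] := B_bil a x 0 z; rewrite !addr0 form0r addr0 in h. Qed.
Lemma formNl x z : B (- x) z = - B x z.
Proof. by rewrite -scaleN1r formZl mulN1r. Qed.
Lemma formNr x z : B z (- x) = - B z x.
Proof. by rewrite -scaleN1r formZr mulN1r. Qed.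
Lemma formBl x y z : B (x - y) z = B x z - B y z.
Proof. by rewrite formDl formNl. Qed.
Lemma formBr x y z : B z (x - y) = B z x - B z y.
Proof. by rewrite formDr formNr. Qed.

Lemma nondegenerate_eq (B_nd : pca_nondegenerate B) u v :
  (forall w, B u w = B v w) -> u = v.
Proof.
move=> Buv; apply/eqP; rewrite -subr_eq0; apply/eqP/B_nd => w.
by rewrite formBl Buv subrr.
Qed.
End Form.
End Bilinear.

Lemma eq_lincomb (V : zmodType) (l r l' r' : V) : l' = r' -> l - r = l' - r' -> l = r.
Proof. by move=> e d; apply/eqP; rewrite -subr_eq0 d e subrr. Qed.

(* [lincomb e] proves [l = r] from an equation [e : l' = r'] (a combination of
   hypotheses built with [:+] and [:-]) by checking [l - r = l' - r'] with [ring]. *)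
Local Notation "e1 :+ e2" := (congr2 +%R e1 e2) (at level 50, left associativity).
Local Notation "e1 :- e2" := (congr2 (fun a b => a - b) e1 e2)
  (at level 50, left associativity).

Ltac lincomb e := apply: (eq_lincomb e); cbv beta; ring.
Ltac lincomb_row e := apply: (eq_lincomb e); apply/rowP => ?; rewrite !mxE; cbv beta; ring.

Section Riesz.
Variables (K : fieldType) (n : nat).
Local Notation A := 'rV[K]_n.

Definition linear_functional (g : A -> K) := forall a x y, g (a *: x + y) = a * g x + g y.

Lemma linear_functional_row_sum g : linear_functional g ->
  forall u, g u = \sum_(j < n) u 0 j * g (delta_mx 0 j).
Proof.
move=> g_lin.
have gD x y : g (x + y) = g x + g y by rewrite -[x]scale1r g_lin mul1r scale1r.
have g0 : g 0 = 0 by apply: (addrI (g 0)); rewrite -gD !addr0.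
have gZ a x : g (a *: x) = a * g x by rewrite -[a *: x]addr0 g_lin g0 addr0.
move=> u; rewrite {1}(row_sum_delta u) (big_morph g gD g0).
by apply: eq_bigr => j _; rewrite gZ.
Qed.

Variables (B : A -> A -> K) (B_bil : pca_bilinear_form B) (B_nd : pca_nondegenerate B).

Definition gram_mx : 'M[K]_n := \matrix_(i, j) B (delta_mx 0 i) (delta_mx 0 j).

Lemma form_gramE u v : B u v = \sum_(j < n) v 0 j * (u *m gram_mx) 0 j.
Proof.
have linl w : linear_functional (B^~ w) by move=> a x y; case: (B_bil a x y w).
have linr w : linear_functional (B w) by move=> a x y; case: (B_bil a x y w).
rewrite (linear_functional_row_sum (linr u)); apply: eq_bigr => j _; congr (_ * _).
rewrite (linear_functional_row_sum (linl _)) mxE.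
by apply: eq_bigr => i _; rewrite mxE.
Qed.

Lemma gram_unit : gram_mx \in unitmx.
Proof.
rewrite -row_free_unit -kermx_eq0; apply/eqP/row_matrixP => i.
rewrite row0; apply: B_nd => y; rewrite form_gramE.
have -> : row i (kermx gram_mx) *m gram_mx = 0 by rewrite -row_mul mulmx_ker row0.
by apply: big1 => j _; rewrite mxE mulr0.
Qed.

Definition riesz (g : A -> K) : A := \row_j g (delta_mx 0 j) *m invmx gram_mx.

Lemma rieszP g : linear_functional g -> forall z, B (riesz g) z = g z.
Proof.
move=> g_lin z; rewrite form_gramE mulmxKV ?gram_unit //.
by rewrite (linear_functional_row_sum g_lin); apply: eq_bigr => j _; rewrite mxE.
Qed.
End Riesz.

Section Lie.
Variables (K : fieldType) (V : lmodType K) (br : V -> V -> V) (br_lie : lie_algebra br).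

Lemma lie_bilinear : pca_bilinear_op br. Proof. by case: br_lie. Qed.

Lemma lie_anticomm x y : br x y = - br y x.
Proof.
have [_ [alt _]] := br_lie; have := alt (x + y).
rewrite (opDl lie_bilinear) !(opDr lie_bilinear) !alt add0r addr0 => /eqP.
by rewrite addr_eq0 => /eqP.
Qed.

Lemma lie_jacobi_ad x y z : br (br x y) z = br x (br y z) - br y (br x z).
Proof.
have [_ [_ jacobi]] := br_lie; have := jacobi x y z.
rewrite (lie_anticomm z x) (opNr lie_bilinear) (lie_anticomm z (br x y)).
by move/eqP; rewrite subr_eq0 => /eqP.
Qed.
End Lie.

Section Poisson.
Variables (K : fieldType) (V : lmodType K) (mul br : V -> V -> V).
Hypothesis hP : poisson_algebra mul br.

Lemma poisson_comm_assoc : comm_assoc mul. Proof. by case: hP. Qed.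
Lemma poisson_lie : lie_algebra br. Proof. by case: hP => [_ []]. Qed.
Lemma poisson_mul_bilinear : pca_bilinear_op mul. Proof. by case: hP => [[]]. Qed.
Lemma poisson_mulC x y : mul x y = mul y x. Proof. by case: hP => [[_ []]]. Qed.
Lemma poisson_leibniz x y z : br z (mul x y) = mul (br z x) y + mul x (br z y).
Proof. by case: hP => [_ []]. Qed.

Lemma poisson_leibnizl x y z : br (mul x y) z = mul x (br y z) + mul y (br x z).
Proof.
rewrite (lie_anticomm poisson_lie) poisson_leibniz.
rewrite (lie_anticomm poisson_lie z x) (lie_anticomm poisson_lie z y).
rewrite (opNl poisson_mul_bilinear) (opNr poisson_mul_bilinear) (poisson_mulC _ y).
by rewrite opprD !opprK addrC.
Qed.
End Poisson.

Section TransposedBracket.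
Variables (K : fieldType) (V : lmodType K) (mul br : V -> V -> V) (B : V -> V -> K).
Hypotheses (hP : poisson_algebra mul br) (B_bil : pca_bilinear_form B)
  (B_nd : pca_nondegenerate B) (B_sym : pca_symmetric_form B)
  (B_inv : pca_invariant_form B mul) (B_cocycle : comm_2cocycle B br).
Variable circ : V -> V -> V.
Hypothesis circ_def : forall x y z, B (circ x y) z = B y (br x z).

Local Notation br_lie := (poisson_lie hP).
Local Notation mulC := (poisson_mulC hP).
Local Notation brN := (lie_anticomm br_lie).

Lemma form_mul_selfadj x u w : B (mul x u) w = B u (mul x w).
Proof. by rewrite mulC B_inv. Qed.

Lemma circ_commutator x y : circ x y - circ y x = br x y.
Proof.
apply: (nondegenerate_eq B_bil B_nd) => w; rewrite (formBl B_bil) !circ_def.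
have [_ cocycle] := B_cocycle; have := cocycle x w y.
rewrite (B_sym y) (B_sym x) (brN w y) (brN y x) !(formNl B_bil) => h.
lincomb h.
Qed.

Lemma circ_bilinear : pca_bilinear_op circ.
Proof.
move=> a x y z; split; apply: (nondegenerate_eq B_bil B_nd) => w.
  rewrite (formDl B_bil) (formZl B_bil) !circ_def.
  rewrite (opDl (lie_bilinear br_lie)) (opZl (lie_bilinear br_lie)).
  by rewrite (formDr B_bil) (formZr B_bil).
by rewrite (formDl B_bil) (formZl B_bil) !circ_def (formDl B_bil) (formZl B_bil).
Qed.

Lemma circ_anti_pre_lie1 x y z :
  circ x (circ y z) - circ y (circ x z) = circ (commutator circ y x) z.
Proof.
apply: (nondegenerate_eq B_bil B_nd) => w.
rewrite /commutator circ_commutator (formBl B_bil) !circ_def.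
by rewrite -(formBr B_bil) -(lie_jacobi_ad br_lie).
Qed.

Lemma form_br_mulr u x z w :
  B u (br x (mul z w)) = B (mul u w) (br x z) + B (mul u z) (br x w).
Proof.
rewrite (poisson_leibniz hP) (formDr B_bil) (mulC _ w) -!form_mul_selfadj.
by rewrite (mulC w) (mulC z).
Qed.

Lemma form_br_mull z x y w :
  B z (br (mul x y) w) = B (mul x z) (br y w) + B (mul y z) (br x w).
Proof. by rewrite (poisson_leibnizl hP) (formDr B_bil) -!form_mul_selfadj. Qed.

Lemma form_cocycle_mul x y z w :
  B (mul x y) (br z w) + B (mul x w) (br y z) + B (mul y w) (br x z)
  = B (mul x z) (br y w) + B (mul y z) (br x w).
Proof.
have [_ cocycle] := B_cocycle; have := cocycle z w (mul x y).
rewrite (B_sym (br z w)) (brN w) (formNl B_bil).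
rewrite (B_sym (br (mul x y) w)) (B_sym (br (mul x y) z)) !form_br_mull => h.
lincomb h.
Qed.

Lemma circ_mull x y z : circ (mul x y) z = mul x (circ y z) + mul y (circ x z).
Proof.
apply: (nondegenerate_eq B_bil B_nd) => w.
rewrite (formDl B_bil) !form_mul_selfadj !circ_def form_br_mull !form_br_mulr.
by rewrite (brN y x) (formNr B_bil) (mulC z x) (mulC z y); ring.
Qed.

Lemma mul_commutator x y z :
  mul (circ x y - circ y x) z = mul y (circ x z) - circ x (mul y z).
Proof.
apply: (nondegenerate_eq B_bil B_nd) => w.
rewrite circ_commutator (formBl B_bil) B_inv form_mul_selfadj !circ_def form_br_mulr.
by rewrite (B_sym (br x y)) (mulC z y); ring.
Qed.

Lemma circ_mulr x y z : circ z (mul x y) + mul z (circ x y) + mul z (circ y x)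
                        - (circ (mul x y) z) *+ 2 = 0.
Proof.
apply: (nondegenerate_eq B_bil B_nd) => w.
rewrite mulr2n (form0l B_bil) !(formDl B_bil, formNl B_bil) !(form_mul_selfadj z) !circ_def.
rewrite form_br_mull !form_br_mulr.
lincomb (form_cocycle_mul x y z w).
Qed.
End TransposedBracket.

Lemma pchar0_double_eq0 (K : fieldType) (V : lmodType K) (v : V) :
  [pchar K] =i pred0 -> v *+ 2 = 0 -> v = 0.
Proof.
move=> K0; rewrite -scaler_nat => /eqP; rewrite scaler_eq0 => /orP [|/eqP //].
by move/pcharf0P: K0 => ->.
Qed.

Section AntiPreLieCommutator.
Variables (K : fieldType) (n : nat) (circ : 'rV[K]_n -> 'rV[K]_n -> 'rV[K]_n).
Hypotheses (circ_bil : pca_bilinear_op circ)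
  (circ_apl : forall x y z,
     circ x (circ y z) - circ y (circ x z) = circ (commutator circ y x) z).
Local Notation br := (commutator circ).

Lemma commutator_jacobi x y z :
  br x (br y z) + br y (br z x) + br z (br x y)
  = - ((circ (br x y) z + circ (br y z) x + circ (br z x) y) *+ 2).
Proof.
have := circ_apl x y z; have := circ_apl y z x; have := circ_apl z x y.
rewrite /commutator !(opBl circ_bil, opBr circ_bil) => h3 h2 h1.
lincomb_row (h1 :+ h2 :+ h3).
Qed.
End AntiPreLieCommutator.

Section TransposedPCA.
Variables (K : fieldType) (n : nat).
Local Notation A := 'rV[K]_n.
Variables (mul br : A -> A -> A) (B : A -> A -> K).
Hypotheses (hP : poisson_algebra mul br) (B_bil : pca_bilinear_form B)
  (B_nd : pca_nondegenerate B) (B_sym : pca_symmetric_form B)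
  (B_inv : pca_invariant_form B mul) (B_cocycle : comm_2cocycle B br).

Definition transposed_bracket (x y : A) : A := riesz B (fun z => B y (br x z)).

Lemma transposed_bracketP x y z : B (transposed_bracket x y) z = B y (br x z).
Proof.
apply: (rieszP B_bil B_nd) => a u v.
by rewrite (opDr (lie_bilinear (poisson_lie hP))) (opZr (lie_bilinear (poisson_lie hP)))
  (formDr B_bil) (formZr B_bil).
Qed.

Variable circ : A -> A -> A.
Hypothesis circ_def : forall x y z, B (circ x y) z = B y (br x z).

Lemma circ_anti_pre_lie2 (K0 : [pchar K] =i pred0) x y z :
  circ (commutator circ x y) z + circ (commutator circ y z) x
  + circ (commutator circ z x) y = 0.
Proof.
have := commutator_jacobi (circ_bilinear hP B_bil B_nd circ_def)
  (circ_anti_pre_lie1 hP B_bil B_nd B_sym B_cocycle circ_def) x y z.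
have [_ [_ jacobi]] := poisson_lie hP.
rewrite /commutator !(circ_commutator hP B_bil B_nd B_sym B_cocycle circ_def) jacobi.
move=> /esym/eqP; rewrite oppr_eq0 => /eqP.
exact: pchar0_double_eq0.
Qed.

Lemma transposed_pca (K0 : [pchar K] =i pred0) : PCA_algebra mul circ.
Proof.
split; first exact: poisson_comm_assoc hP.
split; first split; last split; last split.
- exact (circ_bilinear hP B_bil B_nd circ_def).
- split; first exact (circ_anti_pre_lie1 hP B_bil B_nd B_sym B_cocycle circ_def).
  exact: circ_anti_pre_lie2.
- exact (circ_mull hP B_bil B_nd B_inv circ_def).
- exact (mul_commutator hP B_bil B_nd B_sym B_inv B_cocycle circ_def).
- exact (circ_mulr hP B_bil B_nd B_sym B_inv B_cocycle circ_def).
Qed.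
End TransposedPCA.

Lemma commutator_lie (K : fieldType) (n : nat) (circ : 'rV[K]_n -> 'rV[K]_n -> 'rV[K]_n) :
  anti_pre_lie circ -> lie_algebra (commutator circ).
Proof.
case=> circ_bil [apl1 apl2]; split; first exact: commutator_bilinear.
split=> [x|x y z]; first by rewrite /commutator subrr.
by rewrite (commutator_jacobi circ_bil apl1) apl2 mul0rn oppr0.
Qed.

Section PCACommutator.
Variables (K : fieldType) (n : nat) (mul circ : 'rV[K]_n -> 'rV[K]_n -> 'rV[K]_n).
Hypothesis hPCA : PCA_algebra mul circ.
Local Notation br := (commutator circ).

Lemma pca_comm_assoc : comm_assoc mul. Proof. by case: hPCA. Qed.
Lemma pca_mul_bilinear : pca_bilinear_op mul. Proof. by case: hPCA => [[]]. Qed.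
Lemma pca_mulC x y : mul x y = mul y x. Proof. by case: hPCA => [[_ []]]. Qed.
Lemma pca_anti_pre_lie : anti_pre_lie circ. Proof. by case: hPCA => [_ []]. Qed.
Lemma pca_circ_mull x y z : circ (mul x y) z = mul x (circ y z) + mul y (circ x z).
Proof. by case: hPCA => [_ [_ []]]. Qed.
Lemma pca_mul_commutator x y z :
  mul (circ x y - circ y x) z = mul y (circ x z) - circ x (mul y z).
Proof. by case: hPCA => [_ [_ [_ []]]]. Qed.
Lemma pca_circ_mulr x y z : circ z (mul x y) + mul z (circ x y) + mul z (circ y x)
                            - (circ (mul x y) z) *+ 2 = 0.
Proof. by case: hPCA => [_ [_ [_ []]]]. Qed.

Lemma pca_mul_commutatorr x y z :
  mul z (circ x y) - mul z (circ y x) = mul y (circ x z) - circ x (mul y z).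
Proof. by rewrite -(opBr pca_mul_bilinear) pca_mulC pca_mul_commutator. Qed.

Lemma commutator_leibniz x y z : br z (mul x y) = mul (br z x) y + mul x (br z y).
Proof.
have := pca_circ_mull x y z; have := pca_circ_mulr x y z.
have := pca_mul_commutatorr x y z; have := pca_mul_commutatorr x z y.
have := pca_mul_commutatorr y x z; have := pca_mul_commutatorr y z x.
rewrite (pca_mulC z x) (pca_mulC z y) => b4 b3 b2 b1 c a.
rewrite /commutator (pca_mulC (_ - _)) !(opBr pca_mul_bilinear).
lincomb_row (a :- b1 :+ c :+ b2 :- b3 :+ b4).
Qed.

Lemma pca_circ_mull_circ x y z : circ (mul x y) z = circ x (mul y z) + circ y (mul x z).
Proof.
have := pca_circ_mull x y z.
have := pca_mul_commutatorr x y z; have := pca_mul_commutatorr y x z.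
move=> b2 b1 a; lincomb_row (a :- b1 :- b2).
Qed.
End PCACommutator.

Section Pairing.
Variables (K : fieldType) (n : nat).
Local Notation A := 'rV[K]_n.

Lemma pairing_bilinear : pca_bilinear_form (@pairing K n).
Proof.
move=> c a b x; split; rewrite /pairing mulr_sumr -big_split; apply: eq_bigr => i _;
  rewrite !mxE.
  by rewrite mulrDl mulrA.
by rewrite mulrDr mulrCA.
Qed.

Lemma pairing_delta (v : A) j : pairing v (delta_mx 0 j) = v 0 j.
Proof.
rewrite /pairing (bigD1 j) //= big1 => [|i ij]; rewrite !mxE ?eqxx.
  by rewrite /= mulr1 addr0.
by rewrite (negbTE ij) andbF mulr0.
Qed.

Lemma pairing_inj (v w : A) : (forall u, pairing v u = pairing w u) -> v = w.
Proof. by move=> vw; apply/rowP => j; rewrite -!pairing_delta vw. Qed.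

Lemma pairing_dual (f : A -> A -> A) : pca_bilinear_op f ->
  forall x a u, pairing (- dual_rep (Lmul f) x a) u = pairing a (f x u).
Proof.
move=> f_bil x a u.
have lin : linear_functional (fun u => pairing a (f x u)).
  move=> c v w; rewrite (opDr f_bil) (opZr f_bil).
  by rewrite (formDr pairing_bilinear) (formZr pairing_bilinear).
rewrite (linear_functional_row_sum lin u) /pairing.
by apply: eq_bigr => j _; rewrite !mxE opprK mulrC.
Qed.
End Pairing.

Section SemidirectProduct.
Variables (K : fieldType) (n : nat) (mul circ : 'rV[K]_n -> 'rV[K]_n -> 'rV[K]_n).
Local Notation br := (commutator circ).
Local Notation sdm := (sd_mul mul (fun x a => - dual_rep (Lmul mul) x a)).
Local Notation sdb := (sd_br br (fun x a => - dual_rep (Lmul circ) x a)).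
Local Notation pairing_bil := (@pairing_bilinear K n).

Lemma sd_mul_comm_assoc : comm_assoc mul -> comm_assoc sdm.
Proof.
case=> mul_bil [mulC mulA]; split; [|split].
- move=> c [x a] [y b] [z d]; split; apply: injective_projections => /=;
    first [exact: (mul_bil c x y z).1 | exact: (mul_bil c x y z).2 | apply: pairing_inj => u];
    rewrite !(formDl pairing_bil, formZl pairing_bil, pairing_dual mul_bil, opDl mul_bil,
              opZl mul_bil, formDr pairing_bil, formZr pairing_bil); ring.
- by move=> [x a] [y b]; apply: injective_projections => /=; [exact: mulC | exact: addrC].
- move=> [x a] [y b] [z c]; apply: injective_projections => /=; first exact: mulA.
  apply: pairing_inj => u; rewrite !(formDl pairing_bil, pairing_dual mul_bil).
  have mulCA v w t : mul v (mul w t) = mul w (mul v t) by rewrite -!mulA (mulC v).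
  by rewrite !mulA (mulCA x y) (mulCA x z); ring.
Qed.

Lemma sd_br_lie : anti_pre_lie circ -> lie_algebra sdb.
Proof.
move=> hC; have [circ_bil [apl1 _]] := hC; split; [|split].
- move=> c [x a] [y b] [z d]; split; apply: injective_projections => /=;
    first [exact: (commutator_bilinear circ_bil c x y z).1
          | exact: (commutator_bilinear circ_bil c x y z).2 | apply: pairing_inj => u];
    rewrite !(formDl pairing_bil, formBl pairing_bil, formNl pairing_bil,
              formZl pairing_bil, pairing_dual circ_bil, opDl circ_bil, opZl circ_bil,
              formDr pairing_bil, formZr pairing_bil); ring.
- by move=> [x a]; apply: injective_projections => /=; rewrite /commutator !subrr.
- move=> [x a] [y b] [z c]; apply: injective_projections => /=.
    by have [_ [_ jacobi]] := commutator_lie hC; exact: jacobi.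
  apply: pairing_inj => u; rewrite (form0l pairing_bil).
  rewrite !(formDl pairing_bil, formBl pairing_bil, formNl pairing_bil, pairing_dual circ_bil).
  have := congr1 (pairing a) (apl1 z y u); have := congr1 (pairing b) (apl1 x z u).
  have := congr1 (pairing c) (apl1 y x u).
  rewrite !(formBr pairing_bil) => h3 h2 h1; lincomb (h1 :+ h2 :+ h3).
Qed.

Lemma sd_leibniz : PCA_algebra mul circ ->
  forall p q r, sdb r (sdm p q) = sdm (sdb r p) q + sdm p (sdb r q).
Proof.
move=> hPCA [x a] [y b] [z c]; apply: injective_projections => /=.
  exact: commutator_leibniz.
have [circ_bil _] := pca_anti_pre_lie hPCA; have mul_bil := pca_mul_bilinear hPCA.
apply: pairing_inj => u.
rewrite !(formDl pairing_bil, formBl pairing_bil, formNl pairing_bil,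
           pairing_dual circ_bil, pairing_dual mul_bil).
have mul_circ w : mul w (circ z u) = mul (br z w) u + circ z (mul w u).
  by rewrite /commutator (pca_mul_commutator hPCA) subrK.
by rewrite !mul_circ (pca_circ_mull_circ hPCA) !(formDr pairing_bil); ring.
Qed.

Lemma sd_poisson : PCA_algebra mul circ -> poisson_algebra sdm sdb.
Proof.
move=> hPCA; split; first exact: sd_mul_comm_assoc (pca_comm_assoc hPCA).
split; first exact: sd_br_lie (pca_anti_pre_lie hPCA).
exact: sd_leibniz.
Qed.

Lemma Bd_invariant : comm_assoc mul -> pca_invariant_form (@Bd K n) sdm.
Proof.
case=> mul_bil [mulC _] [x a] [y b] [z c].
rewrite /Bd /= !(formDl pairing_bil, pairing_dual mul_bil) (mulC y x) (mulC z x); ring.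
Qed.

Lemma Bd_cocycle : pca_bilinear_op circ -> comm_2cocycle (@Bd K n) sdb.
Proof.
move=> circ_bil; split=> [p q|[x a] [y b] [z c]]; first by rewrite /Bd addrC.
rewrite /Bd /= !(formDl pairing_bil, formBl pairing_bil, formNl pairing_bil,
                 pairing_dual circ_bil).
by rewrite /commutator !(formBr pairing_bil); ring.
Qed.
End SemidirectProduct.

Theorem mainTheorem3 (K : fieldType) (hK : [pchar K] =i pred0) (n : nat) :
  (* (1) *)
  (forall (mul br : 'rV[K]_n -> 'rV[K]_n -> 'rV[K]_n) (B : 'rV[K]_n -> 'rV[K]_n -> K),
     poisson_algebra mul br ->
     pca_bilinear_form B -> pca_nondegenerate B -> pca_symmetric_form B ->
     pca_invariant_form B mul -> comm_2cocycle B br ->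
     (exists circ : 'rV[K]_n -> 'rV[K]_n -> 'rV[K]_n,
        forall x y z, B (circ x y) z = B y (br x z)) /\
     (forall circ : 'rV[K]_n -> 'rV[K]_n -> 'rV[K]_n,
        (forall x y z, B (circ x y) z = B y (br x z)) ->
        PCA_algebra mul circ /\ (forall x y, circ x y - circ y x = br x y)))
  /\
  (* (2) *)
  (forall (mul circ : 'rV[K]_n -> 'rV[K]_n -> 'rV[K]_n),
     PCA_algebra mul circ ->
     let br := commutator circ in
     let mu := fun x a => - dual_rep (Lmul mul) x a in
     let rho := fun x a => - dual_rep (Lmul circ) x a in
     poisson_algebra (sd_mul mul mu) (sd_br br rho) /\
     pca_invariant_form (@Bd K n) (sd_mul mul mu) /\
     comm_2cocycle (@Bd K n) (sd_br br rho)).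
Proof.
split=> [mul br B hP B_bil B_nd B_sym B_inv B_cocycle | mul circ hPCA br mu rho].
  split=> [|circ circ_def].
    exists (transposed_bracket br B); exact (transposed_bracketP hP B_bil B_nd).
  split; first exact (transposed_pca hP B_bil B_nd B_sym B_inv B_cocycle circ_def hK).
  exact (circ_commutator hP B_bil B_nd B_sym B_cocycle circ_def).
have [circ_bil _] := pca_anti_pre_lie hPCA.
split; first exact (sd_poisson hPCA).
by split; [exact (Bd_invariant (pca_comm_assoc hPCA)) | exact (Bd_cocycle circ_bil)].
Qed.
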